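(* Let $\mathcal{S}$ be a finite set of states, for each $s\in\mathcal{S}$ let $\mathcal{A}(s)$ be a finite nonempty set of actions, and let $\mathcal{P}:=\{(s,a): s\in\mathcal{S}, a\in\mathcal{A}(s)\}$ be the (finite) set of state-action pairs. Let $\mu,\mu'\in(\mathbb{R}_{>0})^{\mathcal{P}}$ be two fully supported measures on $\mathcal{P}$ and let $\pi(\mu),\pi(\mu')$ be their induced policies. If $\|\mu'-\mu\|_\infty\le \epsilon\,\min(\mu)$ for some $\epsilon<(2|\mathcal{P}|)^{-1}$, then $$\|\pi(\mu')-\pi(\mu)\|_\infty:=\max_{(s,a)\in\mathcal{P}}\bigl|\pi(\mu')(a|s)-\pi(\mu)(a|s)\bigr|\le 4\epsilon.$$
   Context: For a fully supported measure $\mu$ on $\mathcal{P}$, write $\mu(s):=\sum_{a\in\mathcal{A}(s)}\mu(s,a)$; the policy induced by $\mu$ is the randomized policy $\pi(\mu)(a|s):=\mu(s,a)/\mu(s)$ for $(s,a)\in\mathcal{P}$. Here $\min(\mu):=\min_{z\in\mathcal{P}}\mu(z)$, $\|\mu'-\mu\|_\infty:=\max_{z\in\mathcal{P}}|\mu'(z)-\mu(z)|$, and $|\mathcal{P}|$ is the number of state-action pairs. *)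

From HB Require Import structures.
From mathcomp Require Import all_boot all_order all_algebra.
Set Implicit Arguments. Unset Strict Implicit. Unset Printing Implicit Defensive.
Import Order.TTheory GRing.Theory Num.Theory.
Local Open Scope ring_scope.

Definition pairs (S : finType) (A : S -> finType) : finType := {s : S & A s}.

Section Defs.
Variables (R : realFieldType) (S : finType) (A : S -> finType).

Definition state_mass (mu : pairs A -> R) (s : S) : R :=
  \sum_(a : A s) mu (Tagged A a).

Definition induced_policy (mu : pairs A -> R) (z : pairs A) : R :=
  mu z / state_mass mu (tag z).

Definition supnorm (f : pairs A -> R) : R := \big[Num.max/0]_(z : pairs A) `|f z|.

(* min(mu) over P (P nonempty in the theorem; 0 by convention if empty) *)
Definition minmeas (mu : pairs A -> R) : R :=
  match [pick z : pairs A] with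
  | Some z0 => \big[Num.min/mu z0]_(z : pairs A) mu z
  | None => 0
  end.
End Defs.

From mathcomp Require Import all_boot all_order all_algebra.
From mathcomp Require Import ring lra.
Set Implicit Arguments. Unset Strict Implicit.
Import Order.TTheory GRing.Theory Num.Theory.
Local Open Scope ring_scope.

(* Since eps min(mu) <= eps mu(s,a), the hypothesis says that every mu'(s,a)
   is within relative error eps of mu(s,a); summing over a, the same holds for
   the state masses mu'(s) and mu(s).  A ratio whose numerator and denominator
   are both perturbed by a relative error eps <= 1/2 moves by at most 4 eps, as
   the denominator stays above half its value. *)

Lemma ler_dist_ratio (R : realFieldType) (a a' M M' e : R) :
  0 <= a -> a <= M -> 0 < M -> 0 <= e -> e <= 2^-1 ->
  `|a' - a| <= e * a -> `|M' - M| <= e * M -> `|a' / M' - a / M| <= 4 * e.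
Proof.
move=> a_ge0 aM M_gt0 e_ge0 e_le da dM.
have M'_ge : M <= 2 * M' by move/ler_normlP: dM => [dM _]; nra.
have MM'_gt0 : 0 < M * M' by apply: mulr_gt0; lra.
have -> : a' / M' - a / M = ((a' - a) * M + a * (M - M')) / (M * M').
  by field; rewrite !gt_eqF //; lra.
rewrite normrM normfV (gtr0_norm MM'_gt0) ler_pdivrMr //.
apply: (le_trans (ler_normD _ _)).
rewrite !normrM (gtr0_norm M_gt0) (ger0_norm a_ge0) (distrC M).
apply: (@le_trans _ _ (e * a * M + a * (e * M))).
  by apply: lerD; [apply: ler_wpM2r; lra | apply: ler_wpM2l].
have : 0 <= e * M * (2 * M' - a) by rewrite !mulr_ge0 //; lra.
lra.
Qed.

Section Measures.
Variables (R : realFieldType) (S : finType) (A : S -> finType).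
Implicit Types (mu : pairs A -> R) (f : pairs A -> R).

Lemma normr_le_supnorm f z : `|f z| <= supnorm f.
Proof. exact: (le_bigmax 0 (fun z => `|f z|)). Qed.

Lemma supnorm_le f c : 0 <= c -> (forall z, `|f z| <= c) -> supnorm f <= c.
Proof. by move=> c_ge0 fc; apply/bigmax_leP; split=> // z _; apply: fc. Qed.

Lemma minmeas_le mu z : minmeas mu <= mu z.
Proof. by rewrite /minmeas; case: pickP => [z0 _|/(_ z)//]; apply: bigmin_le. Qed.

Lemma minmeas_gt0 mu (z0 : pairs A) : (forall z, 0 < mu z) -> 0 < minmeas mu.
Proof.
move=> mu_gt0; rewrite /minmeas; case: pickP => [z1 _|/(_ z0)//].
by apply: (big_ind (fun x => 0 < x)) => // x y; rewrite lt_min => -> ->.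
Qed.

Lemma le_state_mass mu s (a : A s) :
  (forall z, 0 <= mu z) -> mu (Tagged A a) <= state_mass mu s.
Proof.
move=> mu_ge0; rewrite /state_mass (bigD1 a) //= lerDl.
by apply: sumr_ge0 => b _; apply: mu_ge0.
Qed.

Lemma dist_state_mass mu mu' e s :
  (forall z, `|mu' z - mu z| <= e * mu z) ->
  `|state_mass mu' s - state_mass mu s| <= e * state_mass mu s.
Proof.
move=> close; rewrite /state_mass -sumrB mulr_sumr.
by apply: (le_trans (ler_norm_sum _ _ _)); apply: ler_sum => a _; apply: close.
Qed.

End Measures.

Theorem mainTheorem1 (R : realFieldType) (S : finType) (A : S -> finType)
  (S_nonempty : (0 < #|S|)%N) (A_nonempty : forall s : S, (0 < #|A s|)%N)
  (mu mu' : pairs A -> R)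
  (mu_pos : forall z, 0 < mu z) (mu'_pos : forall z, 0 < mu' z)
  (eps : R) (heps : eps < (2 * #|pairs A|%:R)^-1)
  (hclose : supnorm (fun z => mu' z - mu z) <= eps * minmeas mu) :
  supnorm (fun z => induced_policy mu' z - induced_policy mu z) <= 4 * eps.
Proof.
have [s0 _] := card_gt0P S_nonempty.
have [a0 _] := card_gt0P (A_nonempty s0).
pose z0 : pairs A := Tagged A a0.
have close_min z : `|mu' z - mu z| <= eps * minmeas mu.
  exact: le_trans (normr_le_supnorm (fun z => mu' z - mu z) z) hclose.
have eps_ge0 : 0 <= eps.
  by rewrite -(pmulr_lge0 _ (minmeas_gt0 z0 mu_pos)) (le_trans _ (close_min z0)).
have P_gt0 : (0 < #|pairs A|)%N by apply/card_gt0P; exists z0.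
have eps_le_half : eps <= 2^-1.
  apply/ltW/(lt_le_trans heps).
  by rewrite lef_pV2 ?posrE ?mulr_gt0 ?ltr0n // ler_peMr // ler1n.
have close z : `|mu' z - mu z| <= eps * mu z.
  exact: le_trans (close_min z) (ler_wpM2l eps_ge0 (minmeas_le mu z)).
have mu_ge0 z : 0 <= mu z by apply: ltW.
apply: supnorm_le => [|[s a]]; first by rewrite mulr_ge0.
have mass_ge : mu (Tagged A a) <= state_mass mu s := le_state_mass a mu_ge0.
apply: ler_dist_ratio => //.
- exact: lt_le_trans (mu_pos _) mass_ge.
- exact: dist_state_mass.
Qed.
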